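(* For every $\alpha\in[0,1]$ there exists a set $G_\alpha\subset[1,2]$ such that $\dim_{\mathrm M}G_\alpha=0$ and $\dim_{\mathrm A}G_\alpha=\alpha$.
   Context: $N(E,\delta)$ is the minimal number of intervals of length $\delta$ covering $E$. $\dim_{\mathrm M}E=\inf\{a>0:\exists c>0\ \forall\delta\in(0,1),\ N(E,\delta)\le c\delta^{-a}\}$. $\dim_{\mathrm A}E=\inf\{a>0:\exists c>0\text{ such that for all subintervals }I\subset[1,2]\text{ and all }\delta\in(0,|I|),\ N(E\cap I,\delta)\le c\delta^{-a}|I|^a\}$. *)

From Stdlib Require Import Reals List ClassicalEpsilon.
From Coquelicot Require Import Coquelicot.
Open Scope R_scope.

Definition covered_by (E : R -> Prop) (delta : R) (n : nat) : Prop :=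
  exists l : list R, length l = n /\
    forall x, E x -> exists a, In a l /\ a <= x <= a + delta.

(* N(E, delta): the minimal number of intervals of length delta covering E
   (chosen by Hilbert's epsilon; it is the genuine minimum whenever some
   finite cover exists, which is the case for bounded E and delta > 0). *)
Definition Ncov (E : R -> Prop) (delta : R) : nat :=
  epsilon (inhabits 0%nat)
    (fun n => covered_by E delta n /\ forall m, covered_by E delta m -> (n <= m)%nat).

Definition dimM (E : R -> Prop) : Rbar :=
  Glb_Rbar (fun a => 0 < a /\ exists c, 0 < c /\
    forall delta, 0 < delta < 1 -> INR (Ncov E delta) <= c * Rpower delta (- a)).

Definition dimA (E : R -> Prop) : Rbar :=
  Glb_Rbar (fun a => 0 < a /\ exists c, 0 < c /\
    forall u v, 1 <= u -> u <= v -> v <= 2 ->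
    forall delta, 0 < delta < v - u ->
      INR (Ncov (fun x => E x /\ u <= x <= v) delta)
        <= c * Rpower delta (- a) * Rpower (v - u) a).

(* G is the set of numbers 1 + sum_{i in F} 2 ^ -i, F a finite set of digit
   levels. The digit levels lie in the blocks (4 ^ k, 4 ^ k + k], and inside a
   block they are the levels i at which floor (alpha * i) increases. Inside a
   window of length 2 ^ -m, G is covered by about 2 ^ c intervals of length
   2 ^ -(m + d), where c is the number of digit levels in (m, m + d]. The blocks
   have density zero, so c = o(d) for m = 0 and the Minkowski dimension is 0.
   The Beatty spacing gives c <= alpha d + 1 for every window, so the Assouad
   dimension is at most alpha; the window starting at block k contains at least
   alpha k - 1 digit levels among its first k, which gives the lower bound. *)

From Stdlib Require Import Reals.
From Coquelicot Require Import Coquelicot.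
From Stdlib Require Import List Arith Lia Lra ClassicalEpsilon.
Import ListNotations.
Open Scope R_scope.

Lemma covered_by_mono (E E' : R -> Prop) delta delta' n :
  (forall x, E' x -> E x) -> delta <= delta' ->
  covered_by E delta n -> covered_by E' delta' n.
Proof.
  intros HE Hd [l [Hl Hcov]]. exists l. split; [exact Hl|].
  intros x Hx. destruct (Hcov x (HE x Hx)) as [a [Ha Hxa]].
  exists a. split; [exact Ha | lra].
Qed.

Lemma Ncov_spec E delta n : covered_by E delta n ->
  covered_by E delta (Ncov E delta) /\
  forall m, covered_by E delta m -> (Ncov E delta <= m)%nat.
Proof.
  intros Hn. unfold Ncov. apply epsilon_spec.
  destruct (Wf_nat.dec_inh_nat_subset_has_unique_least_element (covered_by E delta))
    as [k [Hk _]].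
  - intros k. apply classic.
  - exists n. exact Hn.
  - exists k. exact Hk.
Qed.

Lemma Ncov_le E delta n : covered_by E delta n -> (Ncov E delta <= n)%nat.
Proof. intros Hn. exact (proj2 (Ncov_spec E delta n Hn) n Hn). Qed.

(* Pigeonhole: points more than delta apart lie in distinct intervals of a
   minimal cover. *)
Lemma Ncov_ge_separated E delta n (pts : list R) :
  covered_by E delta n -> NoDup pts -> (forall x, In x pts -> E x) ->
  (forall x y, In x pts -> In y pts -> x <> y -> delta < Rabs (x - y)) ->
  (length pts <= Ncov E delta)%nat.
Proof.
  intros Hn Hnd Hin Hsep. destruct (Ncov_spec E delta n Hn) as [[l [Hl Hcov]] _].
  rewrite <- Hl.
  set (left_end x := epsilon (inhabits 0) (fun a => In a l /\ a <= x <= a + delta)).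
  assert (Hend : forall x, In x pts -> In (left_end x) l /\ left_end x <= x <= left_end x + delta).
  { intros x Hx. apply epsilon_spec, Hcov, Hin, Hx. }
  rewrite <- (length_map left_end pts). apply NoDup_incl_length.
  - apply NoDup_map_NoDup_ForallPairs; [|exact Hnd].
    intros x y Hx Hy Hxy. destruct (Req_dec x y) as [|Hne]; [assumption|].
    specialize (Hsep x y Hx Hy Hne). destruct (Hend x Hx) as [_ Bx].
    destruct (Hend y Hy) as [_ By]. rewrite Hxy in Bx.
    unfold Rabs in Hsep. destruct (Rcase_abs _); lra.
  - intros a Ha. apply in_map_iff in Ha. destruct Ha as [x [<- Hx]]. apply Hend, Hx.
Qed.

Lemma Glb_Rbar_interval (S : R -> Prop) al :
  (forall a, S a -> al <= a) -> (forall a, al < a -> S a) -> Glb_Rbar S = Finite al.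
Proof.
  intros Hlow Hup. apply is_glb_Rbar_unique. split.
  - intros x Hx. apply Hlow, Hx.
  - intros [r| |] Hb; simpl; auto.
    + destruct (Rle_lt_dec r al) as [|Hn]; [assumption|].
      specialize (Hb ((r + al) / 2) (Hup ((r + al) / 2) ltac:(lra))). simpl in Hb. lra.
    + exact (Hb (al + 1) (Hup (al + 1) ltac:(lra))).
Qed.

Lemma pow2_pos n : 0 < 2 ^ n.
Proof. apply pow_lt; lra. Qed.

Lemma INR_pow2 n : INR (2 ^ n) = 2 ^ n.
Proof. rewrite pow_INR. reflexivity. Qed.

Lemma inv_pow2_le m n : (m <= n)%nat -> / 2 ^ n <= / 2 ^ m.
Proof. intros H. apply Rinv_le_contravar; [apply pow2_pos | apply Rle_pow; [lra | exact H]]. Qed.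

Lemma inv_pow2_S_lt n : / 2 ^ S n < / 2 ^ n.
Proof.
  pose proof (pow2_pos n). apply Rinv_lt_contravar; [simpl; nra | simpl; lra].
Qed.

Lemma dyadic_scale x : 0 < x <= 1 -> exists n, / 2 ^ S n < x <= / 2 ^ n.
Proof.
  intros Hx. assert (Hsmall : exists N, / 2 ^ N < x).
  { destruct (INR_unbounded (/ x)) as [N HN]. exists N.
    assert (HN' : INR N < 2 ^ N)
      by (rewrite <- INR_pow2; apply lt_INR, Nat.pow_gt_lin_r; lia).
    rewrite <- (Rinv_inv x). apply Rinv_lt_contravar; [|lra].
    apply Rmult_lt_0_compat; [apply Rinv_0_lt_compat; lra | apply pow2_pos]. }
  destruct Hsmall as [N HN]. induction N as [|N IH]; [simpl in HN; lra|].
  destruct (Rlt_le_dec (/ 2 ^ N) x) as [Hlt | Hle]; [exact (IH Hlt)|].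
  exists N. split; assumption.
Qed.

Lemma Rpower_pos x y : 0 < Rpower x y.
Proof. apply exp_pos. Qed.

Lemma Rpower_inv_pow2 n y : Rpower (/ 2 ^ n) y = Rpower 2 (- INR n * y).
Proof. rewrite <- Rpower_mult, Rpower_Ropp, Rpower_pow by lra. reflexivity. Qed.

Lemma Rpower_opp_antitone a x y : 0 <= a -> 0 < x <= y -> Rpower y (- a) <= Rpower x (- a).
Proof.
  intros Ha Hxy. rewrite !Rpower_Ropp.
  apply Rinv_le_contravar; [apply Rpower_pos | apply Rle_Rpower_l; assumption].
Qed.

Lemma Rpower2_unbounded b C : 0 < b -> exists k, C < Rpower 2 (b * INR k).
Proof.
  intros Hb. pose proof ln_lt_2 as Hln.
  destruct (INR_unbounded (C / (b * ln 2))) as [k Hk]. exists k.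
  assert (HC : C < b * INR k * ln 2).
  { replace C with (C / (b * ln 2) * (b * ln 2)) by (field; lra).
    pose proof (Rmult_lt_compat_r (b * ln 2) _ _ ltac:(nra) Hk). lra. }
  pose proof (exp_ineq1_le (b * INR k * ln 2)). unfold Rpower. lra.
Qed.

Lemma INR_double_pow2 k : INR (2 * 2 ^ k) = 2 * Rpower 2 (INR k).
Proof. rewrite mult_INR, INR_pow2, Rpower_pow by lra. reflexivity. Qed.

Lemma minkowski_bound_of_dyadic_covers E a c0 : 0 <= a -> 0 < c0 ->
  (forall N, exists n, covered_by E (/ 2 ^ N) n /\ INR n <= c0 * Rpower 2 (a * INR N)) ->
  exists c, 0 < c /\
    forall delta, 0 < delta < 1 -> INR (Ncov E delta) <= c * Rpower delta (- a).
Proof.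
  intros Ha Hc0 Hcov. exists (c0 * Rpower 2 a).
  assert (Hc : 0 < c0 * Rpower 2 a) by (apply Rmult_lt_0_compat; [exact Hc0 | apply Rpower_pos]).
  split; [exact Hc|]. intros delta Hd.
  destruct (dyadic_scale delta ltac:(lra)) as [N [HN1 HN2]].
  destruct (Hcov (S N)) as [n [Hn Hbound]].
  assert (HNcov : INR (Ncov E delta) <= INR n).
  { apply le_INR, Ncov_le. apply (covered_by_mono E E (/ 2 ^ S N)); [tauto | lra | exact Hn]. }
  assert (Hscale : Rpower (/ 2 ^ N) (- a) <= Rpower delta (- a))
    by (apply Rpower_opp_antitone; lra).
  rewrite Rpower_inv_pow2 in Hscale.
  replace (a * INR (S N)) with (a + - INR N * - a) in Hbound by (rewrite S_INR; ring).
  rewrite Rpower_plus in Hbound. nra.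
Qed.

Lemma assouad_bound_of_dyadic_covers E a c0 : 0 <= a -> 0 < c0 ->
  (forall u v m d, 1 <= u -> v - u <= / 2 ^ m ->
     exists n, covered_by (fun x => E x /\ u <= x <= v) (/ 2 ^ (m + d)) n /\
       INR n <= c0 * Rpower 2 (a * INR d)) ->
  exists c, 0 < c /\
    forall u v, 1 <= u -> u <= v -> v <= 2 ->
    forall delta, 0 < delta < v - u ->
      INR (Ncov (fun x => E x /\ u <= x <= v) delta)
        <= c * Rpower delta (- a) * Rpower (v - u) a.
Proof.
  intros Ha Hc0 Hcov. exists (c0 * Rpower 2 (2 * a)).
  assert (Hc : 0 < c0 * Rpower 2 (2 * a))
    by (apply Rmult_lt_0_compat; [exact Hc0 | apply Rpower_pos]).
  split; [exact Hc|]. intros u v Hu Huv Hv delta Hd.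
  destruct (dyadic_scale (v - u) ltac:(lra)) as [m [Hm1 Hm2]].
  destruct (dyadic_scale delta ltac:(lra)) as [N [HN1 HN2]].
  assert (HmN : (m <= S N)%nat).
  { destruct (Nat.le_gt_cases m (S N)) as [|Hgt]; [assumption|].
    pose proof (inv_pow2_le (S N) m ltac:(lia)). lra. }
  destruct (Nat.le_exists_sub m (S N) HmN) as [d [Ed _]].
  destruct (Hcov u v m d Hu Hm2) as [n [Hn Hbound]].
  assert (HNcov : INR (Ncov (fun x => E x /\ u <= x <= v) delta) <= INR n).
  { apply le_INR, Ncov_le. eapply covered_by_mono; [| |exact Hn]; [tauto|].
    rewrite Nat.add_comm, <- Ed. lra. }
  assert (Hdelta : Rpower (/ 2 ^ N) (- a) <= Rpower delta (- a))
    by (apply Rpower_opp_antitone; lra).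
  assert (Hwidth : Rpower (/ 2 ^ S m) a <= Rpower (v - u) a)
    by (apply Rle_Rpower_l; [exact Ha | split; [apply Rinv_0_lt_compat, pow2_pos | lra]]).
  rewrite Rpower_inv_pow2 in Hdelta, Hwidth.
  replace (a * INR d) with (2 * a + (- INR N * - a + - INR (S m) * a)) in Hbound
    by (apply (f_equal INR) in Ed; rewrite plus_INR, !S_INR in *; nra).
  rewrite !Rpower_plus in Hbound.
  assert (Hprod : Rpower 2 (- INR N * - a) * Rpower 2 (- INR (S m) * a)
                  <= Rpower delta (- a) * Rpower (v - u) a).
  { apply Rmult_le_compat; [left; apply Rpower_pos | left; apply Rpower_pos | |]; assumption. }
  nra.
Qed.

Section Digits.

Variable P : nat -> Prop.

Fixpoint count_in (m d : nat) : nat :=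
  match d with
  | O => O
  | S d' => if excluded_middle_informative (P (m + S d')) then S (count_in m d')
            else count_in m d'
  end.

(* The numerators r < 2 ^ d of the binary words of length d, read as levels
   m + 1, ..., m + d (most significant first), whose 1-digits sit at levels in P. *)
Fixpoint tails (m d : nat) : list nat :=
  match d with
  | O => [0%nat]
  | S d' => map (fun r => 2 * r)%nat (tails m d') ++
      (if excluded_middle_informative (P (m + S d'))
       then map (fun r => 2 * r + 1)%nat (tails m d') else [])
  end.

Lemma count_in_le_length m d : (count_in m d <= d)%nat.
Proof.
  induction d as [|d IH]; simpl; [lia|].
  destruct (excluded_middle_informative _); lia.
Qed.

Lemma count_in_add m d1 d2 :
  count_in m (d1 + d2) = (count_in m d1 + count_in (m + d1) d2)%nat.
Proof.
  induction d2 as [|d2 IH]; simpl; [rewrite Nat.add_0_r; lia|].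
  rewrite Nat.add_succ_r; simpl. rewrite IH.
  replace (m + S (d1 + d2))%nat with (m + d1 + S d2)%nat by lia.
  destruct (excluded_middle_informative _); lia.
Qed.

Lemma count_in_le_of_bounded m d j :
  (forall i, (m < i <= m + d)%nat -> P i -> (i <= m + j)%nat) -> (count_in m d <= j)%nat.
Proof.
  revert j; induction d as [|d IH]; intros j Hb; simpl; [lia|].
  destruct (excluded_middle_informative _) as [HP|HP].
  - specialize (Hb (m + S d)%nat ltac:(lia) HP). pose proof (count_in_le_length m d). lia.
  - apply IH. intros i Hi HPi. apply Hb; [lia | exact HPi].
Qed.

Lemma length_tails m d : length (tails m d) = (2 ^ count_in m d)%nat.
Proof.
  induction d as [|d IH]; simpl; [reflexivity|].
  destruct (excluded_middle_informative _); simpl;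
    rewrite length_app, !length_map, IH; simpl; lia.
Qed.

Lemma In_tails_S m d t : In t (tails m (S d)) <->
  exists r, In r (tails m d) /\ (t = 2 * r \/ (t = 2 * r + 1 /\ P (m + S d)))%nat.
Proof.
  simpl. rewrite in_app_iff, in_map_iff.
  destruct (excluded_middle_informative _) as [HP|HP]; rewrite ?in_map_iff; split.
  - intros [[r [<- Hr]] | [r [<- Hr]]]; exists r; tauto.
  - intros [r [Hr [-> | [-> _]]]]; [left | right]; exists r; tauto.
  - intros [[r [<- Hr]] | []]. exists r; tauto.
  - intros [r [Hr [-> | [_ HP']]]]; [left; exists r; tauto | contradiction].
Qed.

Lemma tails_lt m d r : In r (tails m d) -> (r < 2 ^ d)%nat.
Proof.
  revert r; induction d as [|d IH]; intros r Hr.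
  - destruct Hr as [<- | []]. simpl; lia.
  - apply In_tails_S in Hr. destruct Hr as [r' [Hr' Ht]].
    specialize (IH r' Hr'). rewrite Nat.pow_succ_r'. lia.
Qed.

Lemma NoDup_tails m d : NoDup (tails m d).
Proof.
  induction d as [|d IH]; simpl.
  - repeat constructor. intros [].
  - apply NoDup_app.
    + apply NoDup_map_NoDup_ForallPairs; [intros x y _ _; lia | exact IH].
    + destruct (excluded_middle_informative _); [|constructor].
      apply NoDup_map_NoDup_ForallPairs; [intros x y _ _; lia | exact IH].
    + intros x H1 H2. destruct (excluded_middle_informative _); [|destruct H2].
      apply in_map_iff in H1, H2. destruct H1 as [a [<- _]], H2 as [b [E _]]. lia.
Qed.

Lemma tails_0 m d : In 0%nat (tails m d).
Proof.
  induction d as [|d IH]; [left; reflexivity|].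
  apply In_tails_S. exists 0%nat. split; [exact IH | lia].
Qed.

Lemma In_tails_add m d1 d2 t : In t (tails m (d1 + d2)) <->
  exists q r, In q (tails m d1) /\ In r (tails (m + d1) d2) /\ t = (q * 2 ^ d2 + r)%nat.
Proof.
  revert t; induction d2 as [|d2 IH]; intros t.
  - rewrite Nat.add_0_r. split.
    + intros Ht. exists t, 0%nat. split; [exact Ht|]. split; [left; reflexivity | simpl; lia].
    + intros [q [r [Hq [[<- | []] ->]]]]. replace (q * 2 ^ 0 + 0)%nat with q by (simpl; lia).
      exact Hq.
  - rewrite Nat.add_succ_r, In_tails_S.
    replace (m + S (d1 + d2))%nat with (m + d1 + S d2)%nat by lia. split.
    + intros [t' [Ht' Hb]]. apply IH in Ht'. destruct Ht' as [q [r [Hq [Hr ->]]]].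
      destruct Hb as [-> | [-> HP]].
      * exists q, (2 * r)%nat. split; [exact Hq|]. split; [apply In_tails_S; exists r; tauto|].
        rewrite Nat.pow_succ_r'. nia.
      * exists q, (2 * r + 1)%nat. split; [exact Hq|]. split; [apply In_tails_S; exists r; tauto|].
        rewrite Nat.pow_succ_r'. nia.
    + intros [q [r' [Hq [Hr' ->]]]]. apply In_tails_S in Hr'. destruct Hr' as [r [Hr Hb]].
      exists (q * 2 ^ d2 + r)%nat. split; [apply IH; exists q, r; tauto|].
      rewrite Nat.pow_succ_r'.
      destruct Hb as [-> | [-> HP]]; [left; nia | right; split; [nia | exact HP]].
Qed.

End Digits.

Lemma count_in_mono (P Q : nat -> Prop) m d :
  (forall i, P i -> Q i) -> (count_in P m d <= count_in Q m d)%nat.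
Proof.
  intros H. induction d as [|d IH]; simpl; [lia|].
  destruct (excluded_middle_informative (P _)) as [HP|];
    destruct (excluded_middle_informative (Q _)); try lia.
  exfalso; auto.
Qed.

Definition dyad (n t : nat) : R := 1 + INR t / 2 ^ n.

Definition dyadic_set (P : nat -> Prop) (x : R) : Prop :=
  exists n t, In t (tails P 0 n) /\ x = dyad n t.

Lemma dyad_scale n j t : dyad (n + j) (t * 2 ^ j) = dyad n t.
Proof.
  unfold dyad. rewrite mult_INR, INR_pow2, pow_add.
  pose proof (pow2_pos n). pose proof (pow2_pos j). field. lra.
Qed.

Lemma dyad_0 n : dyad n 0 = 1.
Proof. unfold dyad. simpl. pose proof (pow2_pos n). field. lra. Qed.

Lemma dyad_refine n j q r : (r < 2 ^ j)%nat ->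
  dyad n q <= dyad (n + j) (q * 2 ^ j + r) /\
  dyad (n + j) (q * 2 ^ j + r) + / 2 ^ (n + j) <= dyad n q + / 2 ^ n.
Proof.
  intros Hr. assert (Hr' : INR r + 1 <= 2 ^ j).
  { rewrite <- S_INR, <- INR_pow2. apply le_INR. exact Hr. }
  pose proof (pow2_pos n). pose proof (pow2_pos j). pose proof (pos_INR r).
  assert (HA : 0 < / (2 ^ n * 2 ^ j)) by (apply Rinv_0_lt_compat; nra).
  assert (E : dyad (n + j) (q * 2 ^ j + r) = dyad n q + INR r * / (2 ^ n * 2 ^ j)).
  { unfold dyad. rewrite plus_INR, mult_INR, INR_pow2, pow_add. field. lra. }
  rewrite E, pow_add. split; [nra|].
  replace (/ 2 ^ n) with (2 ^ j * / (2 ^ n * 2 ^ j)) by (field; lra).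
  nra.
Qed.

Lemma dyad_floor m y : 1 <= y -> exists q, dyad m q <= y < dyad m q + / 2 ^ m.
Proof.
  intros Hy. pose proof (pow2_pos m) as Hm.
  assert (Hinv : 0 < / 2 ^ m) by (apply Rinv_0_lt_compat, Hm).
  destruct (nfloor_ex ((y - 1) * 2 ^ m) ltac:(nra)) as [q Hq].
  assert (E : y = 1 + (y - 1) * 2 ^ m * / 2 ^ m) by (field; lra).
  exists q. unfold dyad, Rdiv. rewrite E. nra.
Qed.

Lemma dyad_lt_cancel m a b k : dyad m a < dyad m b + k / 2 ^ m -> INR a < INR b + k.
Proof.
  unfold dyad. intros H. pose proof (pow2_pos m).
  apply (Rmult_lt_reg_r (/ 2 ^ m)); [apply Rinv_0_lt_compat; assumption|].
  unfold Rdiv in H. lra.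
Qed.

Lemma dyad_separated n a b : a <> b -> / 2 ^ n <= Rabs (dyad n a - dyad n b).
Proof.
  intros Hab. pose proof (pow2_pos n) as Hn.
  assert (Hd : 1 <= Rabs (INR a - INR b)).
  { destruct (Nat.lt_total a b) as [H | [H | H]]; [|contradiction|].
    - assert (INR (S a) <= INR b) by (apply le_INR; lia).
      rewrite S_INR in *. unfold Rabs; destruct (Rcase_abs _); lra.
    - assert (INR (S b) <= INR a) by (apply le_INR; lia).
      rewrite S_INR in *. unfold Rabs; destruct (Rcase_abs _); lra. }
  replace (dyad n a - dyad n b) with ((INR a - INR b) * / 2 ^ n) by (unfold dyad; field; lra).
  rewrite Rabs_mult, (Rabs_pos_eq (/ 2 ^ n)) by (left; apply Rinv_0_lt_compat; assumption).
  pose proof (Rinv_0_lt_compat _ Hn). nra.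
Qed.

Lemma dyadic_set_bounds P x : dyadic_set P x -> 1 <= x <= 2.
Proof.
  intros [n [t [Ht ->]]].
  destruct (dyad_refine 0 n 0 t (tails_lt _ _ _ _ Ht)) as [B1 B2].
  replace (0 * 2 ^ n + t)%nat with t in B1, B2 by lia. simpl in B1, B2.
  rewrite dyad_0 in B1, B2. pose proof (Rinv_0_lt_compat _ (pow2_pos n)). lra.
Qed.

Lemma dyadic_set_truncate P x N : dyadic_set P x ->
  exists q, In q (tails P 0 N) /\ dyad N q <= x < dyad N q + / 2 ^ N.
Proof.
  intros [n [t [Ht ->]]].
  destruct (Nat.le_gt_cases n N) as [Hle | Hlt].
  - destruct (Nat.le_exists_sub n N Hle) as [j [-> _]]. rewrite Nat.add_comm.
    exists (t * 2 ^ j)%nat. split.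
    + apply In_tails_add. exists t, 0%nat. split; [exact Ht|]. split; [apply tails_0 | lia].
    + rewrite dyad_scale. pose proof (Rinv_0_lt_compat _ (pow2_pos (n + j))). lra.
  - destruct (Nat.le_exists_sub N n (Nat.lt_le_incl _ _ Hlt)) as [j [-> _]].
    rewrite Nat.add_comm in Ht |- *. apply In_tails_add in Ht.
    destruct Ht as [q [r [Hq [Hr ->]]]]. exists q. split; [exact Hq|].
    pose proof (dyad_refine N j q r (tails_lt _ _ _ _ Hr)).
    pose proof (Rinv_0_lt_compat _ (pow2_pos (N + j))). lra.
Qed.

(* The window meets at most two level-m cells, and inside each cell the points
   of the set are 2 ^ -(m + d)-close to one of the 2 ^ (count_in P m d)
   admissible refinements. *)
Lemma cover_window P u v m d : 1 <= u -> v - u <= / 2 ^ m ->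
  covered_by (fun x => dyadic_set P x /\ u <= x <= v) (/ 2 ^ (m + d))
    (2 * 2 ^ count_in P m d).
Proof.
  intros Hu Hw. destruct (dyad_floor m u Hu) as [q0 Hq0].
  exists (flat_map (fun q => map (fun r => dyad (m + d) (q * 2 ^ d + r)) (tails P m d))
            [q0; S q0]).
  split.
  - simpl. rewrite !length_app, !length_map, length_tails. simpl. lia.
  - intros x [Gx Bx]. destruct (dyadic_set_truncate P x (m + d) Gx) as [t [Ht Bt]].
    apply In_tails_add in Ht. destruct Ht as [q [r [Hq [Hr ->]]]].
    destruct (dyad_refine m d q r (tails_lt _ _ _ _ Hr)) as [B1 B2].
    exists (dyad (m + d) (q * 2 ^ d + r)). split; [|lra].
    apply in_flat_map. exists q. split; [|apply in_map_iff; exists r; tauto].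
    pose proof (pow2_pos m).
    assert (Hlow : (q0 < S q)%nat).
    { apply INR_lt. rewrite S_INR. apply (dyad_lt_cancel m).
      replace (1 / 2 ^ m) with (/ 2 ^ m) by (field; lra). lra. }
    assert (Hhigh : (q < S (S q0))%nat).
    { apply INR_lt. rewrite !S_INR. replace (INR q0 + 1 + 1) with (INR q0 + 2) by ring.
      apply (dyad_lt_cancel m).
      replace (2 / 2 ^ m) with (/ 2 ^ m + / 2 ^ m) by (field; lra). lra. }
    simpl. lia.
Qed.

Lemma Ncov_window_ge P m k :
  (2 ^ count_in P m k <=
   Ncov (fun x => dyadic_set P x /\ 1 <= x <= 1 + / 2 ^ m)%R (/ 2 ^ S (m + k))%R)%nat.
Proof.
  rewrite <- length_tails, <- (length_map (dyad (m + k))).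
  apply (Ncov_ge_separated _ _ (2 * 2 ^ count_in P m (S k))).
  - rewrite <- Nat.add_succ_r. apply cover_window; lra.
  - apply NoDup_map_NoDup_ForallPairs; [|apply NoDup_tails].
    intros a b _ _ Hab. destruct (Nat.eq_dec a b) as [|Hne]; [assumption|].
    pose proof (dyad_separated (m + k) a b Hne) as Hsep.
    rewrite Hab, Rminus_diag, Rabs_R0 in Hsep.
    pose proof (Rinv_0_lt_compat _ (pow2_pos (m + k))). lra.
  - intros x Hx. apply in_map_iff in Hx. destruct Hx as [r [<- Hr]].
    destruct (dyad_refine m k 0 r (tails_lt _ _ _ _ Hr)) as [B1 B2].
    replace (0 * 2 ^ k + r)%nat with r in B1, B2 by lia. rewrite dyad_0 in B1, B2.
    split.
    + exists (m + k)%nat, r. split; [|reflexivity].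
      apply In_tails_add. exists 0%nat, r. split; [apply tails_0|]. split; [exact Hr | lia].
    + pose proof (Rinv_0_lt_compat _ (pow2_pos (m + k))). lra.
  - intros x y Hx Hy Hxy. apply in_map_iff in Hx, Hy.
    destruct Hx as [a [<- _]], Hy as [b [<- _]].
    assert (Hab : a <> b) by (intros ->; apply Hxy; reflexivity).
    pose proof (dyad_separated (m + k) a b Hab). pose proof (inv_pow2_S_lt (m + k)). lra.
Qed.

(* [beatty al n] is the integer part of [al * n] when [0 <= al <= 1]
   (see [beatty_spec]); the recursion makes its unit steps explicit. *)
Fixpoint beatty (al : R) (n : nat) : nat :=
  match n with
  | O => O
  | S k => if Rle_dec (INR (beatty al k) + 1) (al * INR (S k)) then S (beatty al k)
           else beatty al k
  end.

Lemma beatty_spec al n : 0 <= al <= 1 ->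
  INR (beatty al n) <= al * INR n < INR (beatty al n) + 1.
Proof.
  intros Hal. induction n as [|n IH]; [simpl; lra|]. cbn [beatty].
  destruct (Rle_dec _ _); rewrite ?S_INR in *; nra.
Qed.

Lemma beatty_S al n : beatty al (S n) = beatty al n \/ beatty al (S n) = S (beatty al n).
Proof. simpl. destruct (Rle_dec _ _); auto. Qed.

Definition jumps (al : R) (i : nat) : Prop := beatty al i = S (beatty al (pred i)).

Lemma count_in_jumps_add_le Q al m d :
  (count_in (fun i => Q i /\ jumps al i) m d + beatty al m <= beatty al (m + d))%nat.
Proof.
  induction d as [|d IH]; simpl; [rewrite Nat.add_0_r; lia|].
  rewrite Nat.add_succ_r.
  destruct (excluded_middle_informative _) as [[_ J] | _].
  - unfold jumps in J. simpl pred in J. lia.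
  - destruct (beatty_S al (m + d)); lia.
Qed.

Lemma count_in_jumps_add_ge Q al m d : (forall i, (m < i <= m + d)%nat -> Q i) ->
  (beatty al (m + d) <= count_in (fun i => Q i /\ jumps al i) m d + beatty al m)%nat.
Proof.
  intros HQ. induction d as [|d IH]; simpl; [rewrite Nat.add_0_r; lia|].
  rewrite Nat.add_succ_r.
  specialize (IH ltac:(intros i Hi; apply HQ; lia)).
  destruct (excluded_middle_informative _) as [_ | Hn]; [destruct (beatty_S al (m + d)); lia|].
  destruct (beatty_S al (m + d)) as [E | E]; [lia|].
  exfalso. apply Hn. split; [apply HQ; lia | exact E].
Qed.

Lemma count_in_jumps_le Q al m d : 0 <= al <= 1 ->
  INR (count_in (fun i => Q i /\ jumps al i) m d) <= al * INR d + 1.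
Proof.
  intros Hal. pose proof (le_INR _ _ (count_in_jumps_add_le Q al m d)) as H.
  pose proof (beatty_spec al m Hal). pose proof (beatty_spec al (m + d) Hal).
  rewrite plus_INR in *. lra.
Qed.

Lemma count_in_jumps_ge Q al m d : 0 <= al <= 1 ->
  (forall i, (m < i <= m + d)%nat -> Q i) ->
  al * INR d - 1 <= INR (count_in (fun i => Q i /\ jumps al i) m d).
Proof.
  intros Hal HQ. pose proof (le_INR _ _ (count_in_jumps_add_ge Q al m d HQ)) as H.
  pose proof (beatty_spec al m Hal). pose proof (beatty_spec al (m + d) Hal).
  rewrite plus_INR in *. lra.
Qed.

Definition in_blocks (i : nat) : Prop := exists k, (4 ^ k < i <= 4 ^ k + k)%nat.

Lemma count_in_blocks_le k N : (N <= 4 ^ S k)%nat -> (count_in in_blocks 0 N <= k * k)%nat.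
Proof.
  revert N; induction k as [|k IH]; intros N HN.
  - apply count_in_le_of_bounded. intros i Hi [[|j] Hj]; [simpl in Hj; lia|].
    pose proof (Nat.pow_le_mono_r 4 1 (S j) ltac:(lia) ltac:(lia)). simpl in *. lia.
  - destruct (Nat.le_gt_cases N (4 ^ S k)) as [H | H]; [specialize (IH N H); nia|].
    replace N with (4 ^ S k + (N - 4 ^ S k))%nat by lia. rewrite count_in_add.
    specialize (IH (4 ^ S k)%nat (le_n _)).
    assert (count_in in_blocks (0 + 4 ^ S k) (N - 4 ^ S k) <= S k)%nat.
    { apply count_in_le_of_bounded. intros i Hi [j Hj].
      destruct (Nat.lt_total j (S k)) as [Hl | [-> | Hg]]; [|lia|].
      - pose proof (Nat.pow_le_mono_r 4 j k ltac:(lia) ltac:(lia)).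
        pose proof (Nat.pow_gt_lin_r 4 k ltac:(lia)). rewrite Nat.pow_succ_r' in Hi. lia.
      - pose proof (Nat.pow_le_mono_r 4 (S (S k)) j ltac:(lia) ltac:(lia)). lia. }
    nia.
Qed.

Lemma cube_le_pow4 k : (k * k * k <= 4 ^ k)%nat.
Proof.
  induction k as [|k IH]; [simpl; lia|].
  destruct k as [|[|k]]; [simpl; lia | simpl; lia|].
  rewrite Nat.pow_succ_r'. nia.
Qed.

Lemma in_blocks_sparse K : exists C, forall N, (K * count_in in_blocks 0 N <= N + C)%nat.
Proof.
  exists (K * K * K)%nat.
  assert (H : forall k N, (N <= 4 ^ S k)%nat -> (K * count_in in_blocks 0 N <= N + K * K * K)%nat).
  { induction k as [|k IH]; intros N HN.
    - pose proof (count_in_blocks_le 0 N HN). nia.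
    - destruct (Nat.le_gt_cases N (4 ^ S k)) as [Hle | Hgt]; [exact (IH N Hle)|].
      pose proof (cube_le_pow4 (S k)).
      assert (Hc : (K * count_in in_blocks 0 N <= K * (S k * S k))%nat)
        by (apply Nat.mul_le_mono_l, count_in_blocks_le, HN).
      destruct (Nat.le_gt_cases K (S k)) as [HK | HK].
      + assert (K * (S k * S k) <= S k * S k * S k)%nat by nia. lia.
      + assert (K * (S k * S k) <= K * K * K)%nat by nia. lia. }
  intros N. apply (H N). pose proof (Nat.pow_gt_lin_r 4 (S N) ltac:(lia)). lia.
Qed.

Definition digit_levels (al : R) (i : nat) : Prop := in_blocks i /\ jumps al i.

Lemma digit_levels_sparse al a : 0 < a ->
  exists C, forall N, INR (count_in (digit_levels al) 0 N) <= a * INR N + C.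
Proof.
  intros Ha. destruct (INR_unbounded (/ a)) as [K HK].
  destruct (in_blocks_sparse K) as [C HC]. exists (a * INR C). intros N.
  pose proof (le_INR _ _ (count_in_mono (digit_levels al) in_blocks 0 N (fun i H => proj1 H))).
  pose proof (le_INR _ _ (HC N)) as HCN. rewrite mult_INR, plus_INR in HCN.
  pose proof (pos_INR (count_in in_blocks 0 N)).
  assert (HaK : 1 <= a * INR K).
  { pose proof (Rmult_lt_compat_l a _ _ Ha HK). rewrite Rinv_r in * by lra. lra. }
  nra.
Qed.

Lemma digit_set_minkowski al a : 0 < a ->
  exists c, 0 < c /\ forall delta, 0 < delta < 1 ->
    INR (Ncov (dyadic_set (digit_levels al)) delta) <= c * Rpower delta (- a).
Proof.
  intros Ha. destruct (digit_levels_sparse al a Ha) as [C HC].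
  pose proof (Rpower_pos 2 C).
  apply (minkowski_bound_of_dyadic_covers _ a (2 * Rpower 2 C)); [lra | lra |].
  intros N. exists (2 * 2 ^ count_in (digit_levels al) 0 N)%nat. split.
  - apply (covered_by_mono (fun x => dyadic_set (digit_levels al) x /\ 1 <= x <= 2) _
                            (/ 2 ^ (0 + N))).
    + intros x Hx. split; [exact Hx | apply (dyadic_set_bounds _ _ Hx)].
    + right; reflexivity.
    + apply cover_window; simpl; lra.
  - rewrite INR_double_pow2, Rmult_assoc, <- Rpower_plus.
    apply Rmult_le_compat_l; [lra|]. apply Rle_Rpower; [lra|]. specialize (HC N). lra.
Qed.

Lemma digit_set_assouad_le al a : 0 <= al <= 1 -> al <= a ->
  exists c, 0 < c /\
    forall u v, 1 <= u -> u <= v -> v <= 2 ->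
    forall delta, 0 < delta < v - u ->
      INR (Ncov (fun x => dyadic_set (digit_levels al) x /\ u <= x <= v) delta)
        <= c * Rpower delta (- a) * Rpower (v - u) a.
Proof.
  intros Hal Ha. apply (assouad_bound_of_dyadic_covers _ a 4); [lra | lra|].
  intros u v m d Hu Hw. exists (2 * 2 ^ count_in (digit_levels al) m d)%nat. split.
  - apply cover_window; assumption.
  - rewrite INR_double_pow2.
    replace 4 with (2 * Rpower 2 1) by (rewrite Rpower_1; lra).
    rewrite Rmult_assoc, <- Rpower_plus.
    apply Rmult_le_compat_l; [lra|]. apply Rle_Rpower; [lra|].
    pose proof (count_in_jumps_le in_blocks al m d Hal).
    pose proof (pos_INR d). unfold digit_levels. nra.
Qed.

(* The window [1, 1 + 2 ^ -m] with m = 4 ^ k sees the whole block k: it holds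
   about 2 ^ (al k) points at mutual distance 2 ^ -(m + k), while the bound at
   exponent a < al only allows about 2 ^ (a k) of them. *)
Lemma digit_set_assouad_ge al a c : 0 <= al <= 1 -> a < al ->
  ~ (forall u v, 1 <= u -> u <= v -> v <= 2 ->
     forall delta, 0 < delta < v - u ->
       INR (Ncov (fun x => dyadic_set (digit_levels al) x /\ u <= x <= v) delta)
         <= c * Rpower delta (- a) * Rpower (v - u) a).
Proof.
  intros Hal Ha Hbound.
  destruct (Rpower2_unbounded (al - a) (2 * c * Rpower 2 a) ltac:(lra)) as [k Hk].
  set (m := (4 ^ k)%nat).
  pose proof (inv_pow2_le 0 m ltac:(lia)) as Hm. simpl in Hm. rewrite Rinv_1 in Hm.
  pose proof (inv_pow2_le m (m + k) ltac:(lia)) as Hmk.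
  pose proof (inv_pow2_S_lt (m + k)) as Hdelta.
  pose proof (Rinv_0_lt_compat _ (pow2_pos (S (m + k)))) as Hdelta0.
  specialize (Hbound 1 (1 + / 2 ^ m) ltac:(lra) ltac:(lra) ltac:(lra) (/ 2 ^ S (m + k))
                ltac:(lra)).
  pose proof (le_INR _ _ (Ncov_window_ge (digit_levels al) m k)) as Hpts.
  assert (Hcount : al * INR k - 1 <= INR (count_in (digit_levels al) m k)).
  { apply (count_in_jumps_ge in_blocks al m k Hal). intros i Hi. exists k. exact Hi. }
  replace (1 + / 2 ^ m - 1) with (/ 2 ^ m) in Hbound by ring.
  rewrite !Rpower_inv_pow2, Rmult_assoc, <- Rpower_plus in Hbound.
  rewrite INR_pow2, <- Rpower_pow in Hpts by lra.
  set (X := Rpower 2 (a * INR k + a)).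
  assert (Hup : Rpower 2 (al * INR k - 1) <= c * X).
  { apply (Rle_trans _ (Rpower 2 (INR (count_in (digit_levels al) m k)))).
    - apply Rle_Rpower; lra.
    - unfold X. replace (a * INR k + a) with (- INR (S (m + k)) * - a + - INR m * a)
        by (rewrite S_INR, plus_INR; ring). lra. }
  assert (Hsplit : Rpower 2 ((al - a) * INR k) * X
                   = Rpower 2 (al * INR k - 1) * (2 * Rpower 2 a)).
  { replace (2 * Rpower 2 a) with (Rpower 2 (1 + a)) by (rewrite Rpower_plus, Rpower_1; lra).
    unfold X. rewrite <- !Rpower_plus. f_equal. ring. }
  assert (HX : 0 < X) by apply Rpower_pos.
  assert (H2a : 0 <= 2 * Rpower 2 a) by (pose proof (Rpower_pos 2 a); lra).
  pose proof (Rmult_lt_compat_r X _ _ HX Hk).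
  pose proof (Rmult_le_compat_r _ _ _ H2a Hup).
  lra.
Qed.

Theorem lemma6p2 : forall alpha : R, 0 <= alpha <= 1 ->
  exists G : R -> Prop, (forall x, G x -> 1 <= x <= 2) /\
    dimM G = Finite 0 /\ dimA G = Finite alpha.
Proof.
  intros al Hal. exists (dyadic_set (digit_levels al)).
  split; [exact (dyadic_set_bounds _)|]. split.
  - apply Glb_Rbar_interval.
    + intros a [Ha _]. lra.
    + intros a Ha. split; [exact Ha | exact (digit_set_minkowski al a Ha)].
  - apply Glb_Rbar_interval.
    + intros a [_ [c [_ Hc]]]. destruct (Rlt_le_dec a al) as [Hlt | Hle]; [|exact Hle].
      exfalso. exact (digit_set_assouad_ge al a c Hal Hlt Hc).
    + intros a Ha. split; [lra | apply digit_set_assouad_le; lra].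
Qed.
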